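(* Let $r\geq 2$ be an integer, and let $G$ be a $K_{r+1}$-free finite simple graph of order $n$ without isolated vertices. If $c=\lceil(\delta(G)+1)/2\rceil$, then $$\gamma_{st}(G)\geq \frac{r}{r-1}\left(-(c-1)+\sqrt{(c-1)^2+4\,\frac{r-1}{r}\,c\,n}\right)-n.$$
   Context: A graph is $K_p$-free if it does not contain the complete graph $K_p$ as a subgraph. $\delta(G)$ is the minimum degree. For a vertex $v$, $N(v)$ is its open neighborhood. A signed total dominating function (STDF) of $G$ is a function $f:V(G)\to\{-1,1\}$ such that $\sum_{u\in N(v)}f(u)\geq 1$ for every vertex $v$; the signed total domination number $\gamma_{st}(G)$ is the minimum of $\sum_{v\in V(G)}f(v)$ over all STDFs $f$ of $G$. *)

From mathcomp Require Import all_boot all_order all_algebra.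
Set Implicit Arguments. Unset Strict Implicit. Unset Printing Implicit Defensive.
Import Order.TTheory GRing.Theory Num.Theory.
Local Open Scope ring_scope.

Definition simple_graph (T : finType) (e : rel T) : Prop :=
  symmetric e /\ irreflexive e.

Definition nbhd (T : finType) (e : rel T) (v : T) : {set T} := [set u | e v u].

Definition deg (T : finType) (e : rel T) (v : T) : nat := #|nbhd e v|.

(* minimum degree; for an empty vertex set this is (by convention) 0 *)
Definition min_deg (T : finType) (e : rel T) : nat :=
  (\big[minn/#|T|]_(v : T) deg e v)%N.

Definition no_isolated (T : finType) (e : rel T) : Prop :=
  forall v : T, (0 < deg e v)%N.

Definition Kp_free (T : finType) (e : rel T) (p : nat) : Prop :=
  ~ exists S : {set T}, #|S| = p :> nat /\ {in S &, forall x y, x != y -> e x y}.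

(* a {-1,1}-valued function, encoded by its sign: true ↦ 1, false ↦ -1 *)
Definition sgv (b : bool) : int := if b then 1 else -1.

Definition weight (T : finType) (f : {ffun T -> bool}) : int :=
  \sum_(v : T) sgv (f v).

Definition is_STDF (T : finType) (e : rel T) (f : {ffun T -> bool}) : bool :=
  [forall v : T, 1 <= \sum_(u in nbhd e v) sgv (f u)].

(* signed total domination number: minimum weight of an STDF
   (the arg min is over STDFs; meaningful when the constant-1 function is an STDF,
   i.e. when G has no isolated vertices) *)
Definition gamma_st (T : finType) (e : rel T) : int :=
  weight (Order.arg_min [ffun => true] (is_STDF e) (@weight T)).

From mathcomp Require Import all_boot all_order all_algebra zify ring lra.
Import Order.TTheory GRing.Theory Num.Theory.
Set Implicit Arguments. Unset Strict Implicit.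
Local Open Scope ring_scope.

(* Let [P] be the set of vertices where an optimal STDF [f] is [1] and [M] its
   complement, with [p = |P|], [m = |M|].  Every vertex sees at least one more
   [P]-neighbour than [M]-neighbour, hence at least [c] [P]-neighbours.  Counting
   ordered adjacent pairs, [c m <= e(M, P) = e(P, M)] and [e(P, M) + p <= e(P, P)],
   while Turán's theorem for the [K_{r+1}]-free graph induced on [P] gives
   [r e(P, P) <= (r - 1) p^2].  Hence [r (c m + p) <= (r - 1) p^2]; solving this
   quadratic inequality for [p] with [p + m = n] bounds [p - m = weight f] below. *)

Definition clique (T : finType) (e : rel T) (K : {set T}) : bool :=
  [forall x in K, forall y in K, (x != y) ==> e x y].

Lemma Kp_free_clique_card (T : finType) (e : rel T) r K :
  Kp_free e r.+1 -> clique e K -> (#|K| <= r)%N.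
Proof.
move=> free cK; rewrite leqNgt; apply/negP => ltrK; apply: free.
pose s := take r.+1 (enum K).
have us : uniq s by rewrite take_uniq // enum_uniq.
exists [set x in s]; split.
  by rewrite cardsE (card_uniqP us) size_takel // -cardE.
move=> x y; rewrite !inE => /mem_take; rewrite mem_enum => xK.
move=> /mem_take; rewrite mem_enum => yK.
by move/forall_inP: cK => /(_ x xK) /forall_inP /(_ y yK) /implyP.
Qed.

Lemma sum_bool_le_card_pred (T : finType) (A : {set T}) (g : pred T) v :
  v \in A -> ~~ g v -> (\sum_(u in A) g u <= #|A| - 1)%N.
Proof.
move=> vA gv; rewrite (bigD1 v) //= (negbTE gv) add0n (cardD1 v A) vA add1n subn1.
apply: (@leq_trans (\sum_(u in A | u != v) 1)%N); first by apply: leq_sum => u _; exact: leq_b1.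
by rewrite sum1_card; apply/eq_leq/eq_card => u; rewrite !inE andbC.
Qed.

Lemma sum_sgv_setID (T : finType) (f : {ffun T -> bool}) (A : {set T}) :
  \sum_(u in A) sgv (f u) = #|A :&: [set v | f v]|%:Z - #|A :\: [set v | f v]|%:Z.
Proof.
rewrite (big_setID [set v | f v]) /=.
rewrite (eq_bigr (fun _ => 1)); last by move=> u; rewrite !inE => /andP[_ ->].
rewrite [X in (_ + X)%R](eq_bigr (fun _ => -1)); last first.
  by move=> u; rewrite !inE => /andP[/negbTE fu _]; rewrite /sgv fu.
by rewrite !sumr_const mulNrn !natz.
Qed.

Lemma weight_plus_minus (T : finType) (f : {ffun T -> bool}) :
  weight f = #|[set v | f v]|%:Z - #|~: [set v | f v]|%:Z.
Proof.
rewrite /weight (eq_bigl [in [set: T]]) => [|v]; last by rewrite inE.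
by rewrite sum_sgv_setID setTI setTD.
Qed.

Section SimpleGraph.

Variables (T : finType) (e : rel T).
Hypotheses (e_sym : symmetric e) (e_irr : irreflexive e).

(* Ordered adjacent pairs, so [adj_pairs A A] is twice the number of edges in [A]. *)
Definition adj_pairs (A B : {set T}) : nat := \sum_(v in A) \sum_(u in B) e v u.

Lemma adj_pairsC (A B : {set T}) : adj_pairs A B = adj_pairs B A.
Proof.
rewrite /adj_pairs exchange_big /=.
by apply: eq_bigr => v _; apply: eq_bigr => u _; rewrite e_sym.
Qed.

Lemma adj_pairs_splitr (A K S : {set T}) : K \subset S ->
  adj_pairs A S = (adj_pairs A K + adj_pairs A (S :\: K))%N.
Proof.
move=> KS; rewrite /adj_pairs -big_split; apply: eq_bigr => v _.
by rewrite (big_setID K) /= (setIidPr KS).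
Qed.

Lemma adj_pairs_splitl (A K S : {set T}) : K \subset S ->
  adj_pairs S A = (adj_pairs K A + adj_pairs (S :\: K) A)%N.
Proof. by move=> KS; rewrite ![adj_pairs _ A]adj_pairsC; exact: adj_pairs_splitr. Qed.

Lemma card_nbhdI v (A : {set T}) : #|nbhd e v :&: A| = (\sum_(u in A) e v u)%N.
Proof. by rewrite -big_mkcondr /= sum1_card; apply: eq_card => u; rewrite !inE andbC. Qed.

Lemma adj_pairs_self_le (A : {set T}) : (adj_pairs A A <= #|A| * (#|A| - 1))%N.
Proof.
rewrite -sum_nat_const; apply: leq_sum => v vA.
by apply: (sum_bool_le_card_pred vA); rewrite /= e_irr.
Qed.

Definition subclique (S : {set T}) : pred {set T} :=
  [pred A : {set T} | (A \subset S) && clique e A].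

Lemma maxclique_nonadj (S K : {set T}) v :
  maxset (subclique S) K -> v \in S :\: K ->
  exists2 u, u \in K & ~~ e v u.
Proof.
move=> maxK; rewrite inE => /andP[vK vS].
have /andP[KS cK] := maxsetp maxK.
apply/exists_inP; rewrite -negb_forall_in; apply: contra vK => /forall_inP adjv.
have cvK : clique e (v |: K).
  apply/forall_inP => a; rewrite !inE => /predU1P[->|aK];
    apply/forall_inP => b; rewrite !inE => /predU1P[->|bK]; apply/implyP => ab.
  - by rewrite eqxx in ab.
  - exact: adjv.
  - by rewrite e_sym adjv.
  - by move/forall_inP: cK => /(_ a aK) /forall_inP /(_ b bK) /implyP /(_ ab).
have vKS : v |: K \subset S by rewrite subUset sub1set vS.
by rewrite -(maxsetsup maxK _ (subsetUr [set v] K)) ?setU11 // /subclique /= vKS.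
Qed.

Lemma adj_pairs_maxclique_le (S K : {set T}) :
  maxset (subclique S) K ->
  (adj_pairs (S :\: K) K <= #|S :\: K| * (#|K| - 1))%N.
Proof.
move=> maxK; rewrite -sum_nat_const; apply: leq_sum => v vS'.
have [u uK nevu] := maxclique_nonadj maxK vS'.
exact: (sum_bool_le_card_pred (g := e v) uK).
Qed.

Lemma turan_step (r a b d q s : nat) : (a <= s * (s - 1))%N -> (b <= q * (s - 1))%N ->
  (r * d <= (r - 1) * q ^ 2)%N -> (s <= r)%N -> (0 < s)%N ->
  (r * (a + b + (b + d)) <= (r - 1) * (q + s) ^ 2)%N.
Proof.
move=> le_a le_b le_d sr s0.
have h1 : (r * (s - 1) <= (r - 1) * s)%N.
  by rewrite mulnBr mulnBl muln1 mul1n mulnC leq_sub2l.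
have h2 : (r * (s - 1) * (s + 2 * q) <= (r - 1) * s * (s + 2 * q))%N by apply: leq_mul.
set t := (s - 1)%N in le_a le_b h1 h2 *; set u := (r - 1)%N in le_d h1 h2 *.
have ra : (r * a <= r * (s * t))%N by rewrite leq_mul2l le_a orbT.
have rb : (r * b <= r * (q * t))%N by rewrite leq_mul2l le_b orbT.
clearbody t u; lia.
Qed.

(* Turán: peel off a maximal clique [K] of [S]; each vertex outside [K] misses a
   vertex of [K], and induct on [S :\: K]. *)
Lemma turan r : (forall K, clique e K -> (#|K| <= r)%N) ->
  forall S : {set T}, (r * adj_pairs S S <= (r - 1) * #|S| ^ 2)%N.
Proof.
move=> clique_le S.
elim: {S}#|S|.+1 {-2}S (ltnSn #|S|) => // k IH S leSk.
have [->|[x xS]] := set_0Vmem S; first by rewrite /adj_pairs big_set0 muln0.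
have Sx : subclique S [set x].
  rewrite /subclique /= sub1set xS; apply/forall_inP => a /set1P ->.
  by apply/forall_inP => b /set1P ->; rewrite eqxx.
have [K maxK xK] := maxset_exists Sx.
have /andP[KS cK] := maxsetp maxK.
have K0 : (0 < #|K|)%N by apply/card_gt0P; exists x; rewrite -sub1set.
set S' := S :\: K.
have cardS : #|S| = (#|S'| + #|K|)%N by rewrite -(cardsID K S) (setIidPr KS) addnC.
have IHS' : (r * adj_pairs S' S' <= (r - 1) * #|S'| ^ 2)%N.
  by apply: IH; move: leSk K0; rewrite cardS; lia.
rewrite (adj_pairs_splitl _ KS) !(adj_pairs_splitr _ KS) [adj_pairs K S']adj_pairsC cardS.
apply: turan_step IHS' _ K0 => //.
- exact: adj_pairs_self_le.
- exact: adj_pairs_maxclique_le.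
- exact: clique_le.
Qed.

Lemma min_deg_le v : (min_deg e <= deg e v)%N.
Proof. by rewrite /min_deg -minEnat; have := bigmin_le (T := nat) #|T| v (deg e). Qed.

Lemma is_STDF_nbhd_lt f v : is_STDF e f ->
  (#|nbhd e v :\: [set u | f u]| < #|nbhd e v :&: [set u | f u]|)%N.
Proof. by move=> /forallP /(_ v); rewrite sum_sgv_setID; lia. Qed.

Lemma is_STDF_nbhd_plus_ge f v : is_STDF e f ->
  ((min_deg e).+2./2 <= #|nbhd e v :&: [set u | f u]|)%N.
Proof.
move=> /(is_STDF_nbhd_lt v); have := cardsID [set u | f u] (nbhd e v).
by have := min_deg_le v; rewrite /deg; lia.
Qed.

Lemma is_STDF_plus_minus_bound r f : Kp_free e r.+1 -> is_STDF e f ->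
  (r * (#|~: [set v | f v]| * (min_deg e).+2./2 + #|[set v | f v]|)
     <= (r - 1) * #|[set v | f v]| ^ 2)%N.
Proof.
move=> free stdf; set P := [set v | f v].
have minus_to_plus : (#|~: P| * (min_deg e).+2./2 <= adj_pairs (~: P) P)%N.
  rewrite -sum_nat_const; apply: leq_sum => v _.
  by rewrite -card_nbhdI; exact: is_STDF_nbhd_plus_ge.
have plus_to_minus : (adj_pairs P (~: P) + #|P| <= adj_pairs P P)%N.
  rewrite -[X in (_ + X <= _)%N]muln1 -sum_nat_const -big_split /=.
  apply: leq_sum => v _; rewrite -!card_nbhdI addn1 -setDE.
  exact: is_STDF_nbhd_lt.
apply: leq_trans (turan (fun K => Kp_free_clique_card free) P).
rewrite leq_mul2l (leq_trans _ plus_to_minus) ?orbT //.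
by rewrite leq_add2r -adj_pairsC.
Qed.

End SimpleGraph.

Lemma quadratic_plus_minus_bound (R : rcfType) (p m c r : R) :
  2 <= r -> 1 <= c -> 0 <= p -> 0 <= m ->
  r * (m * c + p) <= (r - 1) * p ^+ 2 ->
  r / (r - 1) * (- (c - 1) + Num.sqrt ((c - 1) ^+ 2 + 4 * ((r - 1) / r) * c * (p + m)))
    - (p + m) <= p - m.
Proof.
move=> r2 c1 p0 m0 quad.
have a0 : 0 < r - 1 by lra.
have r0 : 0 < r by lra.
set a := r - 1 in a0 quad *.
(* [t] is the value of [-(c - 1) + sqrt ...] at which the claimed bound becomes [2 p]. *)
set t := 2 * p * a / r + (c - 1).
have t0 : 0 <= t.
  rewrite /t addr_ge0 ?subr_ge0 //.
  by rewrite divr_ge0 ?(ltW r0) // !mulr_ge0 ?(ltW a0).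
have disc_le : (c - 1) ^+ 2 + 4 * (a / r) * c * (p + m) <= t ^+ 2.
  rewrite -subr_ge0.
  have -> : t ^+ 2 - ((c - 1) ^+ 2 + 4 * (a / r) * c * (p + m)) =
      4 * a / r ^+ 2 * (a * p ^+ 2 - r * (m * c + p)).
    by rewrite /t; field; rewrite gt_eqF.
  rewrite mulr_ge0 ?subr_ge0 //.
  by rewrite divr_ge0 ?exprn_ge0 ?(ltW r0) // mulr_ge0 ?(ltW a0).
have sqrt_le : Num.sqrt ((c - 1) ^+ 2 + 4 * (a / r) * c * (p + m)) <= t.
  by rewrite -(ger0_norm t0) -sqrtr_sqr ler_wsqrtr.
have : r / a * (- (c - 1) + Num.sqrt ((c - 1) ^+ 2 + 4 * (a / r) * c * (p + m)))
    <= r / a * (2 * p * a / r).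
  by apply: ler_wpM2l; [rewrite divr_ge0 ?ltW | rewrite addrC lerBlDr].
have -> : r / a * (2 * p * a / r) = 2 * p by field; rewrite !gt_eqF.
lra.
Qed.

Theorem theorem3p7 (R : rcfType) (r : nat) (T : finType) (e : rel T) :
  (2 <= r)%N ->
  simple_graph e ->
  (0 < #|T|)%N ->
  no_isolated e ->
  Kp_free e r.+1 ->
  let n : R := (#|T|)%:R in
  let c : R := ((min_deg e).+2./2)%:R in
  let rr : R := r%:R in
  (gamma_st e)%:~R >=
    rr / (rr - 1) * (- (c - 1) + Num.sqrt ((c - 1) ^+ 2 + 4 * ((rr - 1) / rr) * c * n)) - n.
Proof.
move=> r2 [e_sym e_irr] _ no_iso free /=.
have one_STDF : is_STDF e [ffun=> true].
  apply/forallP => v; rewrite (eq_bigr (fun _ => 1)) => [|u _]; last by rewrite ffunE.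
  by rewrite sumr_const ler1n; apply: no_iso.
rewrite /gamma_st; case: arg_minP => // f stdf _.
have := is_STDF_plus_minus_bound e_sym e_irr free stdf.
rewrite weight_plus_minus -(cardsC [set v | f v]) natrD.
rewrite -(ler_nat R) !natrM !natrD !natrM natrB ?(leq_trans _ r2) // expr2 => quad.
rewrite rmorphB /=; apply: quadratic_plus_minus_bound => //.
- by rewrite ler_nat.
- by rewrite ler1n.
Qed.
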